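(* Let $b(\lambda)=\frac14\lambda^4+\frac12p\lambda^2+q\lambda$ with $p<0$, $q\in\mathbb{R}$. For $\eta\ne q$ let $\lambda(\eta)$ be the unique point at which $\lambda\mapsto\eta\lambda-b(\lambda)$ attains its global maximum, and let $\lambda(q)=\sqrt{-p}$ (so that $|\lambda(\eta)|\ge\sqrt{-p}$ for all $\eta$). Fix $x$ with $|x|>\sqrt{-p}$. Then for all $\eta\in\mathbb{R}$: (a) $x^2+x\lambda(\eta)+\lambda(\eta)^2+p\ge -2p$ if $|x|\ge2\sqrt{-p}$, and $\ge|x|(|x|-\sqrt{-p})$ if $\sqrt{-p}<|x|<2\sqrt{-p}$; (b) $x^2+2x\lambda(\eta)+3\lambda(\eta)^2+2p\ge-4p$ if $|x|\ge3\sqrt{-p}$, and $\ge(|x|-\sqrt{-p})^2$ if $\sqrt{-p}<|x|<3\sqrt{-p}$. In particular both expressions are bounded below by a positive constant independent of $\eta$. *)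

From Stdlib Require Import Reals Lra.
Open Scope R_scope.

Definition b (p q lam : R) : R := / 4 * lam ^ 4 + / 2 * p * lam ^ 2 + q * lam.

Definition unique_global_argmax (f : R -> R) (l : R) : Prop :=
  (forall mu, f mu <= f l) /\ (forall m, (forall mu, f mu <= f m) -> m = l).

(* Completing the square, [b] is [q l + (l^2 + p)^2/4] up to a constant.  If [l] maximises
   [c l - (l^2 + p)^2/4] with [c > 0], then [l >= 0] (compare with [-l]), and [l] cannot lie
   in [[0, sqrt(-p))], where [sqrt(-p)] does strictly better; by symmetry [l^2 >= -p] whenever
   [c <> 0].  So every [lambda(eta)] satisfies [|lambda(eta)| >= s := sqrt(-p)], and both
   expressions become quadratics in [lambda] minimised over [|lambda| >= s]: the minimum is at
   the vertex when it lies in that region and at [lambda = -s sgn x] otherwise. *)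

From Stdlib Require Import Reals Lra Psatz.
Open Scope R_scope.

Lemma b_complete_square (p q l : R) : b p q l = q * l + (l ^ 2 + p) ^ 2 / 4 - p ^ 2 / 4.
Proof. unfold b; field. Qed.

Lemma maximizer_sq_ge_pos (c p l : R) :
  0 < c ->
  (forall mu, c * mu - (mu ^ 2 + p) ^ 2 / 4 <= c * l - (l ^ 2 + p) ^ 2 / 4) ->
  - p <= l ^ 2.
Proof.
  intros hc hmax.
  destruct (Rle_or_lt (- p) (l ^ 2)) as [| hlt]; [assumption | exfalso].
  assert (hl : 0 <= l).
  { pose proof (hmax (- l)) as h. nra. }
  set (s := sqrt (- p)).
  assert (hs2 : s * s = - p) by (apply sqrt_sqrt; nra).
  assert (hs : 0 <= s) by apply sqrt_pos.
  assert (hls : l < s) by nra.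
  pose proof (hmax s) as h.
  assert (0 <= (l ^ 2 + p) ^ 2) by apply pow2_ge_0.
  replace (s ^ 2 + p) with 0 in h by (simpl; lra).
  nra.
Qed.

Lemma maximizer_sq_ge (c p l : R) :
  c <> 0 ->
  (forall mu, c * mu - (mu ^ 2 + p) ^ 2 / 4 <= c * l - (l ^ 2 + p) ^ 2 / 4) ->
  - p <= l ^ 2.
Proof.
  intros hc hmax.
  destruct (Rtotal_order c 0) as [hneg | [-> | hpos]].
  - replace (l ^ 2) with ((- l) ^ 2) by ring.
    apply (maximizer_sq_ge_pos (- c)); [lra |].
    intro mu. pose proof (hmax (- mu)) as h.
    replace ((- mu) ^ 2) with (mu ^ 2) in h by ring.
    replace ((- l) ^ 2) with (l ^ 2) by ring. lra.
  - contradiction.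
  - exact (maximizer_sq_ge_pos c p l hpos hmax).
Qed.

Lemma legendre_maximizer_sq_ge (p q eta l : R) :
  eta <> q ->
  (forall mu, eta * mu - b p q mu <= eta * l - b p q l) ->
  - p <= l ^ 2.
Proof.
  intros hne hmax.
  apply (maximizer_sq_ge (eta - q)); [lra |].
  intro mu. pose proof (hmax mu) as h.
  rewrite !b_complete_square in h. lra.
Qed.

Lemma sq_le_sq_cases (s m : R) : 0 < s -> s ^ 2 <= m ^ 2 -> s <= m \/ m <= - s.
Proof. intros hs hsm. destruct (Rle_or_lt 0 m); [left | right]; nra. Qed.

Lemma mul_Rabs_reflect (x l : R) : exists m, x * l = Rabs x * m /\ m ^ 2 = l ^ 2.
Proof.
  destruct (Rcase_abs x) as [hx | hx].
  - exists (- l). rewrite Rabs_left by exact hx. split; ring.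
  - exists l. rewrite Rabs_right by exact hx. split; ring.
Qed.

Section QuadraticBounds.

Variables s a m : R.
Hypothesis s_pos : 0 < s.
Hypothesis s_lt_a : s < a.
Hypothesis s_le_m : s ^ 2 <= m ^ 2.

Lemma quad1_ge_vertex : 2 * s <= a -> a ^ 2 + a * m + m ^ 2 - s ^ 2 >= 2 * s ^ 2.
Proof. intro ha. assert (0 <= (2 * m + a) ^ 2) by apply pow2_ge_0. nra. Qed.

Lemma quad1_ge_boundary : a < 2 * s -> a ^ 2 + a * m + m ^ 2 - s ^ 2 >= a * (a - s).
Proof.
  intro ha. destruct (sq_le_sq_cases s m s_pos s_le_m) as [hm | hm]; [nra |].
  assert (0 <= (m + s) * (m - s + a)) by nra. nra.
Qed.

Lemma quad2_ge_vertex : 3 * s <= a -> a ^ 2 + 2 * a * m + 3 * m ^ 2 - 2 * s ^ 2 >= 4 * s ^ 2.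
Proof. intro ha. assert (0 <= (3 * m + a) ^ 2) by apply pow2_ge_0. nra. Qed.

Lemma quad2_ge_boundary :
  a < 3 * s -> a ^ 2 + 2 * a * m + 3 * m ^ 2 - 2 * s ^ 2 >= (a - s) ^ 2.
Proof.
  intro ha. destruct (sq_le_sq_cases s m s_pos s_le_m) as [hm | hm]; [nra |].
  assert (0 <= (m + s) * (3 * m - 3 * s + 2 * a)) by nra. nra.
Qed.

End QuadraticBounds.

Lemma quadratic_bounds (p x l : R) :
  p < 0 -> sqrt (- p) < Rabs x -> - p <= l ^ 2 ->
  (2 * sqrt (- p) <= Rabs x -> x ^ 2 + x * l + l ^ 2 + p >= - 2 * p) /\
  (Rabs x < 2 * sqrt (- p) -> x ^ 2 + x * l + l ^ 2 + p >= Rabs x * (Rabs x - sqrt (- p))) /\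
  (3 * sqrt (- p) <= Rabs x -> x ^ 2 + 2 * x * l + 3 * l ^ 2 + 2 * p >= - 4 * p) /\
  (Rabs x < 3 * sqrt (- p) ->
     x ^ 2 + 2 * x * l + 3 * l ^ 2 + 2 * p >= (Rabs x - sqrt (- p)) ^ 2).
Proof.
  intros hp hx hl.
  set (s := sqrt (- p)) in *.
  assert (hs : 0 < s) by (apply sqrt_lt_R0; lra).
  assert (hps : p = - s ^ 2) by (unfold s; simpl; rewrite Rmult_1_r, sqrt_sqrt; lra).
  destruct (mul_Rabs_reflect x l) as [m [hxl hm]].
  assert (hsm : s ^ 2 <= m ^ 2) by lra.
  assert (hx2 : x ^ 2 = Rabs x ^ 2) by (rewrite <- Rsqr_pow2, <- Rsqr_pow2; apply Rsqr_abs).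
  assert (hx2l : 2 * x * l = 2 * (Rabs x * m)) by lra.
  rewrite hx2, hx2l, hxl, <- hm, hps.
  repeat split; intro ha.
  - pose proof (quad1_ge_vertex s (Rabs x) m hs hx ha). lra.
  - pose proof (quad1_ge_boundary s (Rabs x) m hs hx hsm ha). lra.
  - pose proof (quad2_ge_vertex s (Rabs x) m hs hx ha). lra.
  - pose proof (quad2_ge_boundary s (Rabs x) m hs hx hsm ha). lra.
Qed.

Theorem proposition6p1 (p q x : R) (lam : R -> R)
  (hp : p < 0)
  (hlam : forall eta, eta <> q ->
            unique_global_argmax (fun l => eta * l - b p q l) (lam eta))
  (hlamq : lam q = sqrt (- p))
  (hx : sqrt (- p) < Rabs x) :
  (forall eta : R,
     (2 * sqrt (- p) <= Rabs x ->
        x ^ 2 + x * lam eta + lam eta ^ 2 + p >= - 2 * p) /\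
     (Rabs x < 2 * sqrt (- p) ->
        x ^ 2 + x * lam eta + lam eta ^ 2 + p >= Rabs x * (Rabs x - sqrt (- p))) /\
     (3 * sqrt (- p) <= Rabs x ->
        x ^ 2 + 2 * x * lam eta + 3 * lam eta ^ 2 + 2 * p >= - 4 * p) /\
     (Rabs x < 3 * sqrt (- p) ->
        x ^ 2 + 2 * x * lam eta + 3 * lam eta ^ 2 + 2 * p >= (Rabs x - sqrt (- p)) ^ 2))
  /\
  (exists c : R, c > 0 /\
     forall eta : R,
       x ^ 2 + x * lam eta + lam eta ^ 2 + p >= c /\
       x ^ 2 + 2 * x * lam eta + 3 * lam eta ^ 2 + 2 * p >= c).
Proof.
  assert (hlam_sq : forall eta, - p <= lam eta ^ 2).
  { intro eta. destruct (Req_dec eta q) as [-> | hne].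
    - rewrite hlamq. simpl. rewrite Rmult_1_r, sqrt_sqrt; lra.
    - exact (legendre_maximizer_sq_ge p q eta _ hne (proj1 (hlam eta hne))). }
  pose proof (fun eta => quadratic_bounds p x (lam eta) hp hx (hlam_sq eta)) as hbounds.
  split; [exact hbounds |].
  set (s := sqrt (- p)) in *.
  assert (hs : 0 <= s) by apply sqrt_pos.
  exists (Rmin (- 2 * p) ((Rabs x - s) ^ 2)).
  pose proof (Rmin_l (- 2 * p) ((Rabs x - s) ^ 2)).
  pose proof (Rmin_r (- 2 * p) ((Rabs x - s) ^ 2)).
  split.
  - apply Rmin_glb_lt; [lra | apply pow_lt; lra].
  - intro eta. destruct (hbounds eta) as [h1 [h2 [h3 h4]]]. split.
    + destruct (Rle_or_lt (2 * s) (Rabs x)) as [ha | ha];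
        [specialize (h1 ha) | specialize (h2 ha)]; nra.
    + destruct (Rle_or_lt (3 * s) (Rabs x)) as [ha | ha];
        [specialize (h3 ha) | specialize (h4 ha)]; nra.
Qed.
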